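(* Let $0\le r\le n$ and let $T=P(x,u_0,\dots,u_r)$, with $P$ a real polynomial, satisfy $T(\mathcal P_n)\subset\mathcal P_n$. If $r<n/2$, then $P$ has total degree at most $1$ in the variables $u_0,\dots,u_r$ (i.e. $T$ is linear up to an additive term $p(x)$). If $r<2n/3$, then $P$ has total degree at most $2$ in $u_0,\dots,u_r$.
   Context: Operators of order $\le r$ are identified with polynomials $P(x,u_0,\dots,u_r)$ acting on smooth $f$ by $P[f](x)=P(x,f(x),f'(x),\dots,f^{(r)}(x))$. $\mathcal P_s$ denotes the space of real polynomials in $x$ of degree at most $s$. *)

From HB Require Import structures.
From mathcomp Require Import all_boot all_order all_algebra.
From mathcomp Require Import reals.
From mathcomp Require Import mpoly.
Set Implicit Arguments. Unset Strict Implicit. Unset Printing Implicit Defensive.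
Import GRing.Theory Num.Theory.
Local Open Scope ring_scope.

(* A differential operator of order <= r, P(x, u_0, ..., u_r), is encoded as a
   multivariate polynomial in the r+1 variables u_0..u_r whose coefficients
   are real polynomials in x. *)
Definition diffop (R : realType) (r : nat) := {mpoly {poly R}[r.+1]}.

Definition apply_op (R : realType) (r : nat) (P : diffop R r) (f : {poly R})
  : {poly R} := P.@[fun i : 'I_r.+1 => f^`(i)].

Definition inPs (R : realType) (s : nat) (f : {poly R}) : Prop := (size f <= s.+1)%N.

(* total degree in u_0..u_r at most d (msize = total degree + 1, 0 for P = 0) *)
Definition udeg_le (R : realType) (r : nat) (P : diffop R r) (d : nat) : Prop :=
  (msize P <= d.+1)%N.

From HB Require Import structures.
From mathcomp Require Import all_boot all_order all_algebra.
From mathcomp Require Import reals.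
From mathcomp Require Import mpoly.
From mathcomp Require Import zify.
Set Implicit Arguments. Unset Strict Implicit. Unset Printing Implicit Defensive.
Import GRing.Theory Num.Theory.
Local Open Scope ring_scope.

(* If [T] preserves [P_n], so does its Gateaux derivative
   [f |-> d/dt T(f + t g)|_(t=0) = sum_i g^(i) (d_i P)(f)] for every [g] in
   [P_n].  For [g = (x - s)^n] each [g^(i)], [i <= r], is divisible by
   [(x - s)^(n-r)], so [D] successive such derivatives of [P] have the form
   [prod_j (x - s_j)^(n-r) * Q_(s_1..s_D)].  If [deg_u P <= D], then [Q] is
   independent of [u] and its image has degree [>= D (n - r) > n] unless
   [Q = 0].  As the [s_j] vary freely, [Q = 0] for all of them forces the
   degree-[D] part of [P] to vanish.  So [deg_u P < D] whenever
   [n < D (n - r)], that is [2r < n] for [D = 2] and [3r < 2n] for [D = 3]. *)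

Lemma mpoly_ring_ind (N : nat) (K : comNzRingType) (T : {mpoly K[N]} -> Prop) :
  (forall c, T c%:MP) -> (forall i, T 'X_i) ->
  (forall p q, T p -> T q -> T (p + q)) -> (forall p q, T p -> T q -> T (p * q)) ->
  forall p, T p.
Proof.
move=> TC TX TD TM p; rewrite (mpolyE p).
apply: (big_ind T) => [|//|m _]; first by rewrite -mpolyC0.
rewrite -mul_mpolyC; apply: (TM) => //; rewrite mpolyXE_id.
apply: (big_ind T) => [|//|i _]; first by rewrite -mpolyC1.
elim: (m i) => [|k IHk]; first by rewrite expr0 -mpolyC1.
by rewrite exprS; apply: (TM).
Qed.

Lemma derivn_exp_XsubC (K : comNzRingType) (c : K) (n i : nat) :
  (('X - c%:P) ^+ n)^`(i) = ('X - c%:P) ^+ (n - i) *+ n ^_ i.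
Proof.
elim: i => [|i IHi]; first by rewrite derivn0 subn0 ffactn0.
rewrite derivnS IHi derivMn deriv_exp derivXsubC mul1r ffactnSr -mulrnA.
by rewrite mulnC -subnS.
Qed.

Lemma size_prod_exp_XsubC (K : idomainType) (ss : seq K) k :
  size (\prod_(s <- ss) ('X - s%:P) ^+ k) = (size ss * k).+1.
Proof.
elim: ss => [|s ss IHss]; first by rewrite big_nil size_poly1.
have nz_exp : ('X - s%:P) ^+ k != 0 by rewrite -size_poly_eq0 size_exp_XsubC.
have nz_prod : \prod_(s <- ss) ('X - s%:P) ^+ k != 0 by rewrite -size_poly_eq0 IHss.
by rewrite big_cons size_mul // IHss size_exp_XsubC /=; lia.
Qed.

Section InfinitePolyRing.
Variable R : numDomainType.

Lemma poly_eq0_of_horner (p : {poly R}) : (forall x, p.[x] = 0) -> p = 0.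
Proof.
move=> p0; apply: (@roots_geq_poly_eq0 _ _ [seq i%:R | i <- iota 0 (size p)]).
- by apply/allP => _ /mapP[i _ ->]; apply/rootP.
- by rewrite map_inj_uniq ?iota_uniq // => i j /eqP; rewrite eqr_nat => /eqP.
- by rewrite size_map size_iota.
Qed.

Lemma size_coef_le_of_horner (F : {poly {poly R}}) k :
  (forall e : R, (size F.[e%:P] <= k)%N) -> forall j, (size (F`_j)%R <= k)%N.
Proof.
move=> sizeF j; apply/leq_sizeP => p le_k_p.
pose Fp : {poly R} := \poly_(i < size F) (F`_i)`_p.
have Fp0 : Fp = 0.
  apply: poly_eq0_of_horner => e; rewrite horner_poly.
  have -> : \sum_(i < size F) (F`_i)`_p * e ^+ i = (F.[e%:P])`_p.
    rewrite horner_coef coef_sum; apply: eq_bigr => i _.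
    by rewrite -rmorphXn /= coefMC.
  exact/leq_sizeP.
have [lt_j_F|le_F_j] := ltnP j (size F); last by rewrite (nth_default _ le_F_j) coef0.
by have := congr1 (fun q : {poly R} => q`_j) Fp0; rewrite coef_poly lt_j_F coef0.
Qed.

End InfinitePolyRing.

Section GateauxDerivative.
Variables (K : comNzRingType) (r : nat).
Local Notation op := {mpoly {poly K}[r.+1]}.
Local Notation app Q f := (Q.@[fun i : 'I_r.+1 => f^`(i)]).

Definition dderiv (Q : op) (g : {poly K}) : op :=
  \sum_(i < r.+1) (g^`(i))%:MP * Q^`M(i).

Definition eval_line (f g : {poly K}) (Q : op) : {poly {poly K}} :=
  (map_mpoly (@polyC {poly K}) Q).@[fun i : 'I_r.+1 => (f^`(i))%:P + 'X * (g^`(i))%:P].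

Lemma dderivD (p q : op) g : dderiv (p + q) g = dderiv p g + dderiv q g.
Proof. by rewrite /dderiv -big_split; apply: eq_bigr => i _; rewrite mderivD mulrDr. Qed.

Lemma dderivM (p q : op) g : dderiv (p * q) g = dderiv p g * q + p * dderiv q g.
Proof.
rewrite /dderiv mulr_suml mulr_sumr -big_split; apply: eq_bigr => i _ /=.
by rewrite mderivM mulrDr mulrA mulrCA.
Qed.

Lemma dderiv_mulC (c : {poly K}) (Q : op) g : dderiv (c%:MP * Q) g = c%:MP * dderiv Q g.
Proof.
by rewrite /dderiv mulr_sumr; apply: eq_bigr => i _; rewrite mderiv_mulC mulrCA.
Qed.

Lemma eval_lineD f g (p q : op) : eval_line f g (p + q) = eval_line f g p + eval_line f g q.
Proof. by rewrite /eval_line raddfD mevalD. Qed.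

Lemma eval_lineM f g (p q : op) : eval_line f g (p * q) = eval_line f g p * eval_line f g q.
Proof. by rewrite /eval_line rmorphM mevalM. Qed.

Lemma horner_eval_line f g (Q : op) (e : K) :
  (eval_line f g Q).[e%:P] = app Q (f + e *: g).
Proof.
elim/mpoly_ring_ind: Q => [c|i|p q IHp IHq|p q IHp IHq].
- by rewrite /eval_line map_mpolyC !mevalC hornerC.
- rewrite /eval_line map_mpolyX !mevalXU hornerD hornerC hornerM hornerX hornerC.
  by rewrite derivnD derivnZ mul_polyC.
- by rewrite eval_lineD hornerD IHp IHq mevalD.
- by rewrite eval_lineM hornerM IHp IHq mevalM.
Qed.

Lemma coef0_eval_line f g (Q : op) : (eval_line f g Q)`_0 = app Q f.
Proof. by rewrite -horner_coef0 horner_eval_line scale0r addr0. Qed.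

Lemma coef1_eval_line f g (Q : op) : (eval_line f g Q)`_1 = app (dderiv Q g) f.
Proof.
elim/mpoly_ring_ind: Q => [c|i|p q IHp IHq|p q IHp IHq].
- rewrite /eval_line /dderiv map_mpolyC mevalC.
  rewrite big1 ?meval0; first exact: (coefC c 1).
  by move=> i _; rewrite mderivC mulr0.
- rewrite /eval_line /dderiv map_mpolyX mevalXU coefD coefC coefXM coefC /= add0r.
  rewrite (bigD1 i) //= big1 => [|j ji]; last first.
    by rewrite mderivX mnm1E eq_sym (negbTE ji) scale0r mulr0.
  rewrite addr0 mderivX mnm1E eqxx.
  have -> : (U_(i) - U_(i))%MM = 0%MM by apply/mnmP => j; rewrite mnmBE subnn mnm0E.
  by rewrite mpolyX0 scale1r mulr1 mevalC.
- rewrite eval_lineD dderivD coefD mevalD.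
  by congr (_ + _); [exact: IHp | exact: IHq].
- rewrite eval_lineM dderivM coefM !big_ord_recr big_ord0 /= add0r mevalD !mevalM addrC.
  congr (_ + _); congr (_ * _);
    by [exact: IHp | exact: IHq | exact: coef0_eval_line].
Qed.

End GateauxDerivative.

Section ReducedDerivative.
Variables (K : comNzRingType) (n r : nat).
Local Notation op := {mpoly {poly K}[r.+1]}.

(* [dderiv Q ((x - s)^n)] divided by its common factor [(x - s)^(n - r)]. *)
Definition reduced_dderiv (Q : op) (s : K) : op :=
  \sum_(i < r.+1) ((('X - s%:P) ^+ (r - i)) *+ n ^_ i)%:MP * Q^`M(i).

Lemma dderiv_exp_XsubC (Q : op) (s : K) : (r <= n)%N ->
  dderiv Q (('X - s%:P) ^+ n) = (('X - s%:P) ^+ (n - r))%:MP * reduced_dderiv Q s.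
Proof.
move=> le_r_n; rewrite /dderiv /reduced_dderiv mulr_sumr; apply: eq_bigr => i _.
rewrite derivn_exp_XsubC mulrA -mpolyCM mulrnAr -exprD.
have lt_i_r := ltn_ord i; congr ((_ ^+ _ *+ _)%:MP * _); lia.
Qed.

Lemma mcoeff_reduced_dderiv (Q : op) s m : (reduced_dderiv Q s)@_m =
  \sum_(i < r.+1) (('X - s%:P) ^+ (r - i) *+ n ^_ i) * (Q@_(m + U_(i)) *+ (m i).+1).
Proof.
rewrite /reduced_dderiv raddf_sum; apply: eq_bigr => i _.
by apply: etrans (mcoeffCM _ _ _) _; rewrite mcoeff_mderiv.
Qed.

Lemma msize_le_mcoeff (p : op) k :
  (forall m, (k <= mdeg m)%N -> p@_m = 0) -> (msize p <= k)%N.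
Proof.
move=> hi_p0; rewrite msizeE; apply/bigmax_leqP_seq => m m_supp _.
rewrite ltnNge; apply: contraTN m_supp => /hi_p0 p_m0.
by rewrite mcoeff_msupp p_m0 eqxx.
Qed.

Lemma msize_reduced_dderiv (Q : op) s k :
  (msize Q <= k.+1)%N -> (msize (reduced_dderiv Q s) <= k)%N.
Proof.
move=> szQ; apply: msize_le_mcoeff => m le_k_m.
rewrite mcoeff_reduced_dderiv big1 // => i _.
rewrite memN_msupp_eq0 ?mul0rn ?mulr0 //; apply: msize_mdeg_ge.
by rewrite mdegD mdeg1; lia.
Qed.

Lemma msize_reduced_dderivs (ss : seq K) (Q : op) k :
  (msize Q <= k + size ss)%N -> (msize (foldl reduced_dderiv Q ss) <= k)%N.
Proof.
elim: ss Q => [|s ss IHss] Q /= szQ; first by rewrite addn0 in szQ.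
by apply/IHss/msize_reduced_dderiv; rewrite -addnS.
Qed.

End ReducedDerivative.

Arguments reduced_dderiv {K} n {r} Q s.

Section TopDegree.
Variables (R : numDomainType) (n r : nat).
Hypothesis le_r_n : (r <= n)%N.
Local Notation op := {mpoly {poly R}[r.+1]}.

(* Evaluating at [x0] and writing [s = x0 - t], the [m]-th coefficient of the
   reduced derivative becomes a polynomial in [t] whose coefficient of
   [t^(r-i)] is [n^_i (m i + 1) P_(m + U_i)(x0)]. *)
Lemma mcoeff_eq0_of_reduced_dderiv (P : op) m :
  (forall s, (reduced_dderiv n P s)@_m = 0) -> forall i, P@_(m + U_(i)) = 0.
Proof.
move=> red0 i; apply: poly_eq0_of_horner => x0.
pose a (j : 'I_r.+1) : R := (P@_(m + U_(j))).[x0] *+ (m j).+1 *+ n ^_ j.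
pose psi : {poly R} := \sum_(j < r.+1) a j *: 'X^(r - j).
have psi0 : psi = 0.
  apply: poly_eq0_of_horner => t.
  have := congr1 (horner^~ x0) (red0 (x0 - t)).
  rewrite mcoeff_reduced_dderiv horner0 horner_sum => <-.
  rewrite horner_sum; apply: eq_bigr => j _.
  rewrite hornerZ hornerXn hornerM hornerMn horner_exp hornerXsubC hornerMn subKr.
  by rewrite /a mulrC !(mulrnAr, mulrnAl) -!mulrnA mulnC.
have : psi`_(r - i) = 0 by rewrite psi0 coef0.
rewrite coef_sum (bigD1 i) //= big1 => [|j ji]; last first.
  rewrite coefZ coefXn; case: eqP => [eq_rij|]; last by rewrite mulr0.
  have := ltn_ord i; have := ltn_ord j => lt_j_r lt_i_r.
  by case/eqP: ji; apply: val_inj => /=; lia.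
rewrite coefZ coefXn eqxx mulr1 addr0 => /eqP; rewrite !mulrn_eq0 /=.
have -> : (n ^_ i == 0)%N = false.
  by rewrite eqn0Ngt ffact_gt0; have := ltn_ord i; lia.
by move/eqP.
Qed.

Lemma msize_le_of_reduced_dderiv (P : op) D :
  (forall s, (msize (reduced_dderiv n P s) <= D)%N) -> (msize P <= D.+2)%N ->
  (msize P <= D.+1)%N.
Proof.
move=> sz_red szP; apply: msize_le_mcoeff => M le_D_M.
have [lt_D_M|le_M_D] := ltnP D.+1 (mdeg M).
  exact/memN_msupp_eq0/msize_mdeg_ge/(leq_trans szP lt_D_M).
have [i Mi_gt0] : exists i : 'I_r.+1, (0 < M i)%N.
  apply/existsP; apply: contraTT le_D_M => /existsPn M0.
  suff -> : M = 0%MM by rewrite mdeg0.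
  by apply/mnmP => j; rewrite mnm0E; move: (M0 j); rewrite -leqNgt leqn0 => /eqP.
have eqM : M = ((M - U_(i)) + U_(i))%MM.
  rewrite submK //; apply/mnm_lepP => j; rewrite mnm1E.
  by case: eqP => [<-|]; lia.
rewrite eqM; apply: mcoeff_eq0_of_reduced_dderiv => s.
apply/memN_msupp_eq0/msize_mdeg_ge/(leq_trans (sz_red s)).
by move: le_D_M le_M_D; rewrite {1 2}eqM mdegD mdeg1; lia.
Qed.

Lemma msize_le_of_reduced_dderivs_eq0 D (P : op) : (msize P <= D.+1)%N ->
  (forall ss : seq R, size ss = D -> foldl (reduced_dderiv n) P ss = 0) ->
  (msize P <= D)%N.
Proof.
elim: D P => [|D IHD] P szP red0.
  by move: (red0 [::] erefl) => /= ->; rewrite msize0.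
apply: msize_le_of_reduced_dderiv => // s; apply: IHD; first exact: msize_reduced_dderiv.
by move=> ss size_ss; apply: (red0 (s :: ss)); rewrite /= size_ss.
Qed.

End TopDegree.

Section Preservation.
Variables (R : realType) (n r : nat).
Local Notation op := {mpoly {poly R}[r.+1]}.

Definition preserves (Q : op) := forall f, inPs n f -> inPs n (apply_op Q f).

Lemma preserves_dderiv (Q : op) g : preserves Q -> inPs n g -> preserves (dderiv Q g).
Proof.
move=> presQ szg f szf; rewrite /inPs /apply_op -(coef1_eval_line f g).
apply: size_coef_le_of_horner => e; rewrite horner_eval_line; apply: presQ.
rewrite /inPs (leq_trans (size_polyD _ _)) // geq_max szf.
exact: leq_trans (size_scale_leq _ _) szg.
Qed.

Lemma preserves_reduced_dderivs (ss : seq R) (Q : op) (c : {poly R}) : (r <= n)%N ->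
  preserves (c%:MP * Q) ->
  preserves ((c * \prod_(s <- ss) ('X - s%:P) ^+ (n - r))%:MP *
             foldl (reduced_dderiv n) Q ss).
Proof.
move=> le_r_n; elim: ss Q c => [|s ss IHss] Q c presQ /=; first by rewrite big_nil mulr1.
have := preserves_dderiv presQ (eq_leq (size_exp_XsubC n s)).
rewrite dderiv_mulC dderiv_exp_XsubC // mulrA -mpolyCM => /IHss.
by rewrite big_cons mulrA.
Qed.

Lemma reduced_dderivs_eq0 (P : op) (ss : seq R) : (r <= n)%N -> preserves P ->
  (n < size ss * (n - r))%N -> (msize P <= (size ss).+1)%N ->
  foldl (reduced_dderiv n) P ss = 0.
Proof.
move=> le_r_n presP deg_ss szP; set Q := foldl _ P ss.
have /msize1_polyC Q_const : (msize Q <= 1)%N.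
  by apply: msize_reduced_dderivs; rewrite add1n.
have Pn0 : inPs n (0 : {poly R}) by rewrite /inPs size_poly0.
have := @preserves_reduced_dderivs ss P 1 le_r_n; rewrite mpolyC1 mul1r.
move=> /(_ presP 0 Pn0); rewrite -/Q Q_const -mpolyCM /inPs /apply_op mevalC mul1r.
have [->|nz_c] := eqVneq Q@_0 0; first by rewrite mpolyC0.
have nz_prod : \prod_(s <- ss) ('X - s%:P) ^+ (n - r) != 0.
  by rewrite -size_poly_eq0 size_prod_exp_XsubC.
rewrite size_mul // size_prod_exp_XsubC addSn /=.
have c_gt0 : (0 < size Q@_0)%N by rewrite size_poly_gt0.
by move/(leq_trans (leq_add deg_ss c_gt0)); rewrite addn1 ltnn.
Qed.

Lemma msize_le_of_preserves (P : op) d : (r <= n)%N -> preserves P ->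
  (n < d * (n - r))%N -> (msize P <= d)%N.
Proof.
move=> le_r_n presP deg_d.
suff msize_dropK k : (msize P <= d + k)%N -> (msize P <= d)%N by apply/msize_dropK/leq_addl.
elim: k => [|k IHk]; first by rewrite addn0.
rewrite addnS => szP; apply/IHk/(msize_le_of_reduced_dderivs_eq0 le_r_n) => // ss size_ss.
apply: reduced_dderivs_eq0; rewrite ?size_ss //.
exact: leq_trans deg_d (leq_mul (leq_addr k d) (leqnn _)).
Qed.

End Preservation.

Theorem mainTheorem4 (R : realType) (n r : nat) (P : diffop R r) :
  (r <= n)%N ->
  (forall f : {poly R}, inPs n f -> inPs n (apply_op P f)) ->
  ((2 * r < n)%N -> udeg_le P 1) /\ ((3 * r < 2 * n)%N -> udeg_le P 2).
Proof.
move=> le_r_n presP.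
by split=> deg_r; apply: (msize_le_of_preserves le_r_n presP); lia.
Qed.
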